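(* Let $\sigma$ be an implicit signature, $\mathsf V$ a pseudovariety of finite semigroups, $X$ a finite alphabet, and $\mathcal C$ the closure under union, product and iteration ($Y\mapsto Y^+$) of some set of finite subsets of $\Omega^\sigma_X\mathsf S$. Suppose the Pin-Reutenauer procedure holds for $\mathcal C$ over $\mathsf V$, i.e. for all $K,L\in\mathcal C$, with closures taken in $\Omega^\sigma_X\mathsf V$, $$\overline{p_{\mathsf V}(K)p_{\mathsf V}(L)}=\overline{p_{\mathsf V}(K)}\;\overline{p_{\mathsf V}(L)}\quad\text{and}\quad\overline{p_{\mathsf V}(L)^+}=\langle\overline{p_{\mathsf V}(L)}\rangle_\sigma.$$ Then $\mathsf V$ is full with respect to $\mathcal C$: for every $L\in\mathcal C$, $p_{\mathsf V}(\overline{L}^{\,\mathsf S})=\overline{p_{\mathsf V}(L)}$, where $\overline{L}^{\,\mathsf S}$ is the closure of $L$ in $\Omega^\sigma_X\mathsf S$ and the right side is the closure in $\Omega^\sigma_X\mathsf V$.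
   Context: $\overline{\Omega}_X\mathsf V$ is the free pro-$\mathsf V$ semigroup on $X$ and $\mathsf S$ the pseudovariety of all finite semigroups. An implicit signature is a set of implicit operations of finite arity containing binary multiplication; $\Omega^\sigma_X\mathsf V$ is the subalgebra of $\overline{\Omega}_X\mathsf V$ generated by $X$ under the operations of $\sigma$, with the induced topology. $p_{\mathsf V}:\overline{\Omega}_X\mathsf S\to\overline{\Omega}_X\mathsf V$ is the natural continuous homomorphism (it maps $\Omega^\sigma_X\mathsf S$ onto $\Omega^\sigma_X\mathsf V$). $\langle U\rangle_\sigma$ is the $\sigma$-subalgebra generated by $U$. *)

From HB Require Import structures.
From mathcomp Require Import all_boot.
Set Implicit Arguments. Unset Strict Implicit. Unset Printing Implicit Defensive.

Record finSemigroup := FinSemigroup {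
  sg_carrier :> finType;
  smul : sg_carrier -> sg_carrier -> sg_carrier;
  smulA : associative smul }.

Definition sg_hom (S T : finSemigroup) (f : S -> T) : Prop :=
  forall x y, f (smul x y) = smul (f x) (f y).

Definition unitSG : finSemigroup :=
  @FinSemigroup unit (fun _ _ => tt) (fun _ _ _ => erefl).

Definition prod_mul (S T : finSemigroup) (u v : (S * T)%type) : (S * T)%type :=
  (smul u.1 v.1, smul u.2 v.2).
Lemma prod_mulA (S T : finSemigroup) : associative (@prod_mul S T).
Proof. by move=> [? ?] [? ?] [? ?]; rewrite /prod_mul /= !smulA. Qed.
Definition prodSG (S T : finSemigroup) : finSemigroup :=
  @FinSemigroup (S * T)%type (@prod_mul S T) (@prod_mulA S T).

Record pseudovariety (V : finSemigroup -> Prop) : Prop := {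
  pv_sub : forall (S T : finSemigroup) (f : T -> S),
      sg_hom f -> injective f -> V S -> V T;
  pv_quo : forall (S T : finSemigroup) (f : S -> T),
      sg_hom f -> (forall y, exists x, f x = y) -> V S -> V T;
  pv_unit : V unitSG;
  pv_prod : forall S T, V S -> V T -> V (prodSG S T) }.

Definition allSG : finSemigroup -> Prop := fun _ => True.

(** * Free pro-V semigroup on X, as X-ary implicit operations on V.
    An element is a family w_{S,phi} in S, for S in V and phi : X -> S;
    the elements of Omega-bar_X V are the [natural] families. *)
Definition rawfam (X : Type) (V : finSemigroup -> Prop) :=
  forall S : finSemigroup, V S -> (X -> S) -> S.

Definition natural X V (w : rawfam X V) : Prop :=
  forall (S T : finSemigroup) (hS : V S) (hT : V T) (f : S -> T),
    sg_hom f -> forall phi : X -> S, f (w S hS phi) = w T hT (f \o phi).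

Definition implicit_op (n : nat) := {w : rawfam 'I_n allSG | natural w}.
Definition signature := {n : nat & implicit_op n} -> Prop.

Definition mul_raw : rawfam 'I_2 allSG :=
  fun S _ phi => smul (phi ord0) (phi ord_max).
Lemma mul_raw_natural : natural mul_raw.
Proof. by move=> S T hS hT f hf phi; rewrite /mul_raw hf. Qed.
Definition mul_op : {n : nat & implicit_op n} :=
  existT _ 2 (exist _ mul_raw mul_raw_natural).

Definition letter X V (x : X) : rawfam X V := fun S _ phi => phi x.
Definition mulw X V (a b : rawfam X V) : rawfam X V :=
  fun S hS phi => smul (a S hS phi) (b S hS phi).
Definition apply_op X V (o : {n : nat & implicit_op n})
  (ws : 'I_(projT1 o) -> rawfam X V) : rawfam X V :=
  fun S hS phi => sval (projT2 o) S I (fun i => ws i S hS phi).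

Inductive sig_gen X V (sig : signature) (U : rawfam X V -> Prop)
  : rawfam X V -> Prop :=
| sg_base w : U w -> sig_gen sig U w
| sg_op o ws : sig o -> (forall i, sig_gen sig U (ws i)) ->
    sig_gen sig U (@apply_op X V o ws).

Definition Omega_sig X V (sig : signature) : rawfam X V -> Prop :=
  sig_gen sig (fun w => exists x, w = @letter X V x).

(** Topology: the product (pointwise) topology, i.e. the coarsest one
    making every evaluation w |-> w_{S,phi} (S in V discrete) continuous.
    [sclosure sig A] is the closure of A in the subspace Omega^sigma_X V. *)
Record point (X : Type) (V : finSemigroup -> Prop) := Point { pt_S : finSemigroup; pt_V : V pt_S; pt_phi : X -> pt_S }.
Definition agree_at X V (p : point X V) (a b : rawfam X V) : Prop :=
  a (pt_S p) (pt_V p) (pt_phi p) = b (pt_S p) (pt_V p) (pt_phi p).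

Definition sclosure X V (sig : signature) (A : rawfam X V -> Prop) : rawfam X V -> Prop :=
  fun w => Omega_sig sig w /\
    forall (k : nat) (F : 'I_k -> point X V),
      exists2 a, A a & forall i, agree_at (F i) a w.

Definition setmul X V (A B : rawfam X V -> Prop) : rawfam X V -> Prop :=
  fun u => exists a b, A a /\ B b /\ u = mulw a b.
Inductive splus X V (A : rawfam X V -> Prop) : rawfam X V -> Prop :=
| splus1 a : A a -> splus A a
| splusS u a : splus A u -> A a -> splus A (mulw u a).

Definition pV X V (w : rawfam X allSG) : rawfam X V := fun S _ phi => w S I phi.

Definition punion T (A B : T -> Prop) : T -> Prop := fun x => A x \/ B x.
Definition psubset T (A B : T -> Prop) : Prop := forall x, A x -> B x.
Definition pimage T U (f : T -> U) (A : T -> Prop) : U -> Prop :=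
  fun y => exists2 x, A x & f x = y.
Definition finite_pred T (A : T -> Prop) : Prop :=
  exists (n : nat) (f : 'I_n -> T), forall x, A x <-> exists i, f i = x.

Inductive rat_closure X (B : (rawfam X allSG -> Prop) -> Prop)
  : (rawfam X allSG -> Prop) -> Prop :=
| rc_base L : B L -> rat_closure B L
| rc_union K L : rat_closure B K -> rat_closure B L -> rat_closure B (punion K L)
| rc_prod K L : rat_closure B K -> rat_closure B L -> rat_closure B (setmul K L)
| rc_plus L : rat_closure B L -> rat_closure B (splus L).

From mathcomp Require Import all_boot.
From Stdlib Require Import FunctionalExtensionality PropExtensionality ClassicalEpsilon Classical.

Set Implicit Arguments. Unset Strict Implicit. Unset Printing Implicit Defensive.

(* Continuity of p_V gives p_V(closure L) within the closure of p_V(L).  The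
   converse inclusion is proved by induction on the construction of L: a
   finite set is closed, closure commutes with finite unions, and for products
   and iterations the Pin-Reutenauer identities express the closure of
   p_V(K L), resp. p_V(L^+), through the closures of p_V(K) and p_V(L), which
   lift by induction.  What remains is that in Omega^sigma_X S a product of
   closures lies in the closure of the product, and that the closure of L^+ is
   a sigma-subalgebra: at a fixed point (S, phi) the values of L^+ form a
   subsemigroup of S, which every implicit operation preserves, and finitely
   many points can be merged into one by taking their direct product. *)

Lemma rawfam_ext X V (a b : rawfam X V) :
  (forall S hS phi, a S hS phi = b S hS phi) -> a = b.
Proof.
move=> eab; apply: functional_extensionality_dep => S.
apply: functional_extensionality_dep => hS.
apply: functional_extensionality_dep => phi; exact: eab.
Qed.

Lemma rawfam_separated X V (a b : rawfam X V) :
  a <> b -> exists p : point X V, ~ agree_at p a b.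
Proof.
move=> neq_ab; apply: NNPP => nsep; apply: neq_ab; apply: rawfam_ext => S hS phi.
by apply: NNPP => neq; apply: nsep; exists (Point hS phi).
Qed.

Lemma Omega_sig_pV X V sig (w : rawfam X allSG) :
  Omega_sig sig w -> Omega_sig sig (@pV X V w).
Proof.
elim=> [_ [x ->]|o ws so _ IH]; first by apply: sg_base; exists x.
exact: (@sg_op X V sig _ o (fun i => pV (ws i)) so IH).
Qed.

Lemma Omega_sig_natural X sig (w : rawfam X allSG) : Omega_sig sig w -> natural w.
Proof.
elim=> [_ [x ->] //|o ws so _ IH] S T hS hT f hf phi.
rewrite /apply_op (svalP (projT2 o) S T I I f hf).
congr (sval (projT2 o) T I _); apply: functional_extensionality => i /=.
exact: IH.
Qed.

Lemma Omega_sig_mulw X V sig (a b : rawfam X V) : sig mul_op ->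
  Omega_sig sig a -> Omega_sig sig b -> Omega_sig sig (mulw a b).
Proof.
move=> sig_mul Oa Ob.
have -> : mulw a b = @apply_op X V mul_op (fun i : 'I_2 => if i == 0 :> nat then a else b)
  by [].
by apply: sg_op => // i; case: ifP.
Qed.

Lemma mulwA X V (u v w : rawfam X V) : mulw u (mulw v w) = mulw (mulw u v) w.
Proof. by apply: rawfam_ext => S hS phi; rewrite /mulw smulA. Qed.

Lemma splus_mulw X V (A : rawfam X V -> Prop) u v :
  splus A u -> splus A v -> splus A (mulw u v).
Proof.
move=> Au; elim=> [a Aa|v' a _ IH Aa]; first exact: splusS.
by rewrite mulwA; apply: splusS.
Qed.

Section SetOperations.

Variables (T U : Type) (f : T -> U).
Implicit Types A B : T -> Prop.

Lemma pimage_mono A B : psubset A B -> psubset (pimage f A) (pimage f B).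
Proof. by move=> AB _ [x Ax <-]; exists x => //; apply: AB. Qed.

Lemma pimage_punion A B :
  psubset (pimage f (punion A B)) (punion (pimage f A) (pimage f B)).
Proof. by move=> _ [x [Ax|Bx] <-]; [left|right]; exists x. Qed.

Lemma finite_pred_pimage A : finite_pred A -> finite_pred (pimage f A).
Proof.
move=> [n [g Ag]]; exists n, (f \o g) => y; split.
- by move=> [x /Ag [i <-] <-]; exists i.
- by move=> [i <-]; exists (g i) => //; apply/Ag; exists i.
Qed.

End SetOperations.

Lemma setmul_mono X V (A A' B B' : rawfam X V -> Prop) :
  psubset A A' -> psubset B B' -> psubset (setmul A B) (setmul A' B').
Proof.
by move=> AA' BB' _ [a [b [Aa [Bb ->]]]]; exists a, b; split; [apply: AA'|split; [apply: BB'|]].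
Qed.

Section ProjectionPV.

Variables (X : Type) (V : finSemigroup -> Prop).
Implicit Types K L : rawfam X allSG -> Prop.
Local Notation pV := (@pV X V).

Lemma pimage_pV_setmul K L :
  psubset (pimage pV (setmul K L)) (setmul (pimage pV K) (pimage pV L)).
Proof.
move=> _ [_ [a [b [Ka [Lb ->]]]] <-].
by exists (pV a), (pV b); split; [exists a | split; [exists b|]].
Qed.

Lemma setmul_pimage_pV K L :
  psubset (setmul (pimage pV K) (pimage pV L)) (pimage pV (setmul K L)).
Proof. by move=> _ [_ [_ [[a Ka <-] [[b Lb <-] ->]]]]; exists (mulw a b) => //; exists a, b. Qed.

Lemma pimage_pV_splus L :
  psubset (pimage pV (splus L)) (splus (pimage pV L)).
Proof.
move=> _ [w Lw <-]; elim: Lw => [a La|u a _ IH La]; first by apply: splus1; exists a.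
by apply: (splusS IH); exists a.
Qed.

Lemma pimage_pV_sclosure sig L :
  psubset (pimage pV (sclosure sig L)) (sclosure sig (pimage pV L)).
Proof.
move=> _ [w [Ow clw] <-]; split; first exact: Omega_sig_pV.
move=> k F; have [a La agree] := clw k (fun i => Point (I : allSG _) (pt_phi (F i))).
by exists (pV a); [exists a | move=> i; apply: agree].
Qed.

End ProjectionPV.

Section Closure.

Variables (X : Type) (V : finSemigroup -> Prop) (sig : signature).
Implicit Types A B : rawfam X V -> Prop.

Lemma sclosure_mono A B : psubset A B -> psubset (sclosure sig A) (sclosure sig B).
Proof.
move=> AB w [Ow clw]; split=> // k F.
by have [a Aa agree] := clw k F; exists a => //; apply: AB.
Qed.

Lemma subset_sclosure A : psubset A (Omega_sig sig) -> psubset A (sclosure sig A).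
Proof. by move=> AO w Aw; split; [apply: AO | exists w]. Qed.

Lemma sclosure_finite A : finite_pred A -> psubset (sclosure sig A) A.
Proof.
move=> [n [f Af]] v [_ clv]; apply: NNPP => nAv.
have sep i : exists p : point X V, ~ agree_at p (f i) v.
  by apply: rawfam_separated => fiv; apply: nAv; rewrite -fiv; apply/Af; exists i.
have [F HF] := choice _ sep; have [a /Af [j fja] agree] := clv n F.
by apply: (HF j); rewrite fja; apply: agree.
Qed.

Lemma not_sclosure A w : Omega_sig sig w -> ~ sclosure sig A w ->
  exists k (F : 'I_k -> point X V), forall a, A a -> ~ forall i, agree_at (F i) a w.
Proof.
move=> Ow ncl; apply: NNPP => nsep; apply: ncl; split=> // k F.
apply: NNPP => nagree; apply: nsep; exists k, F => a Aa agree.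
by apply: nagree; exists a.
Qed.

Lemma sclosure_punion A B :
  psubset (sclosure sig (punion A B)) (punion (sclosure sig A) (sclosure sig B)).
Proof.
move=> w clw; apply: NNPP => /not_or_and [nA nB].
have [k1 [F1 sepA]] := not_sclosure clw.1 nA.
have [k2 [F2 sepB]] := not_sclosure clw.1 nB.
have [a ABa agree] :=
  clw.2 _ (fun i => match split i with inl j => F1 j | inr j => F2 j end).
case: ABa => [Aa|Ba]; [apply: (sepA a Aa) => j | apply: (sepB a Ba) => j].
- by move: (agree (unsplit (inl j))); rewrite unsplitK.
- by move: (agree (unsplit (inr j))); rewrite unsplitK.
Qed.

Lemma setmul_sclosure A B : sig mul_op ->
  psubset (setmul (sclosure sig A) (sclosure sig B)) (sclosure sig (setmul A B)).
Proof.
move=> sig_mul _ [a [b [cla [clb ->]]]]; split; first exact: Omega_sig_mulw cla.1 clb.1.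
move=> k F; have [a' Aa' agree_a] := cla.2 k F; have [b' Bb' agree_b] := clb.2 k F.
exists (mulw a' b'); first by exists a', b'.
by move=> i; rewrite /agree_at /mulw agree_a agree_b.
Qed.

End Closure.

Lemma sg_hom_fst (S T : finSemigroup) : sg_hom (@fst S T : prodSG S T -> S).
Proof. by []. Qed.

Lemma sg_hom_snd (S T : finSemigroup) : sg_hom (@snd S T : prodSG S T -> T).
Proof. by []. Qed.

Definition prod_point X (p q : point X allSG) : point X allSG :=
  Point (I : allSG (prodSG (pt_S p) (pt_S q))) (fun x => (pt_phi p x, pt_phi q x)).

Lemma agree_at_prod_point X (p q : point X allSG) (a b : rawfam X allSG) :
  natural a -> natural b -> agree_at (prod_point p q) a b ->
  agree_at p a b /\ agree_at q a b.
Proof.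
move=> na nb eab; split.
- move/(congr1 fst): eab.
  by rewrite (na _ _ _ (pt_V p) _ (@sg_hom_fst _ _)) (nb _ _ _ (pt_V p) _ (@sg_hom_fst _ _)).
- move/(congr1 snd): eab.
  by rewrite (na _ _ _ (pt_V q) _ (@sg_hom_snd _ _)) (nb _ _ _ (pt_V q) _ (@sg_hom_snd _ _)).
Qed.

Lemma merge_points X k (F : 'I_k -> point X allSG) :
  exists p : point X allSG, forall a b : rawfam X allSG, natural a -> natural b ->
    agree_at p a b -> forall i, agree_at (F i) a b.
Proof.
elim: k F => [|k IH] F.
  by exists (Point (I : allSG unitSG) (fun _ => tt)) => a b _ _ _ [].
have [p Hp] := IH (fun i => F (lift ord0 i)).
exists (prod_point (F ord0) p) => a b na nb /(agree_at_prod_point na nb) [e0 ep] i.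
by case: (unliftP ord0 i) => [j ->|->]; [apply: Hp ep j | apply: e0].
Qed.

Lemma sclosure_by_points X sig (A : rawfam X allSG -> Prop) w :
  Omega_sig sig w -> psubset A (@natural X allSG) ->
  (forall p : point X allSG, exists2 a, A a & agree_at p a w) -> sclosure sig A w.
Proof.
move=> Ow nA near; split=> // k F.
have [p Hp] := merge_points F; have [a Aa agree] := near p.
by exists a => //; apply: Hp agree => //; [apply: nA | apply: Omega_sig_natural Ow].
Qed.

Section Subsemigroup.

Variables (T : finSemigroup) (P : pred T).
Hypothesis mulP : forall x y, P x -> P y -> P (smul x y).

Definition subsg_mul (x y : {t : T | P t}) : {t : T | P t} :=
  exist _ (smul (val x) (val y)) (mulP (valP x) (valP y)).

Lemma subsg_mulA : associative subsg_mul.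
Proof. by move=> x y z; apply: val_inj; rewrite /= smulA. Qed.

Definition subSG : finSemigroup := FinSemigroup subsg_mulA.

Lemma implicit_op_closed n (o : implicit_op n) (t : 'I_n -> T) :
  (forall i, P (t i)) -> P (sval o T I t).
Proof.
move=> Pt; pose t' i : subSG := exist _ (t i) (Pt i).
have val_hom : sg_hom (fun x : subSG => val x) by [].
have -> : t = val \o t' by [].
by rewrite -(svalP o subSG T I I _ val_hom t'); apply: valP.
Qed.

End Subsemigroup.

Definition sig_closed X V (sig : signature) (C : rawfam X V -> Prop) : Prop :=
  forall o ws, sig o -> (forall i, C (ws i)) -> C (@apply_op X V o ws).

Lemma sclosure_sig_closed X sig (A : rawfam X allSG -> Prop) :
  psubset A (@natural X allSG) -> (forall a b, A a -> A b -> A (mulw a b)) ->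
  sig_closed sig (sclosure sig A).
Proof.
move=> nA mulA o ws so clws.
apply: sclosure_by_points nA _ => [|p]; first exact: sg_op so (fun i => (clws i).1).
pose at_p (a : rawfam X allSG) := a (pt_S p) (pt_V p) (pt_phi p).
have near i : exists a, A a /\ at_p a = at_p (ws i).
  by have [a Aa agree] := (clws i).2 1 (fun _ => p); exists a; split; last apply: agree ord0.
have [ap Hap] := choice _ near.
pose value_of_A t := exists2 b, A b & at_p b = t.
pose P : pred (pt_S p) := fun t => excluded_middle_informative (value_of_A t).
have PP t : P t <-> value_of_A t by rewrite /P; case: excluded_middle_informative.
have mulP x y : P x -> P y -> P (smul x y).
  by move=> /PP [b1 Ab1 <-] /PP [b2 Ab2 <-]; apply/PP; exists (mulw b1 b2); [apply: mulA|].
have /PP [b Ab eb] := @implicit_op_closed _ _ mulP _ (projT2 o) (fun i => at_p (ap i))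
  (fun i => proj2 (PP _) (ex_intro2 _ _ _ (Hap i).1 erefl)).
exists b => //; rewrite /agree_at -/(at_p b) eb /apply_op.
by congr (sval (projT2 o) (pt_S p) I _); apply: functional_extensionality => i; apply: (Hap i).2.
Qed.

Lemma sig_gen_pimage_pV X V sig (U : rawfam X V -> Prop) (C : rawfam X allSG -> Prop) :
  sig_closed sig C -> psubset U (pimage (@pV X V) C) ->
  psubset (sig_gen sig U) (pimage (@pV X V) C).
Proof.
move=> closedC UC w; elim=> [u /UC //|o vs so _ IH].
have lift i : exists u, C u /\ @pV X V u = vs i by have [u Cu <-] := IH i; exists u.
have [ws Hws] := choice _ lift.
exists (@apply_op X allSG o ws); first by apply: closedC => // i; apply: (Hws i).1.
have -> : vs = @pV X V \o ws by apply: functional_extensionality => i; rewrite /= (Hws i).2.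
by [].
Qed.

Section Fullness.

Variables (sig : signature) (V : finSemigroup -> Prop) (X : Type).
Variable B : (rawfam X allSG -> Prop) -> Prop.
Local Notation pV := (@pV X V).
Hypothesis sig_mul : sig mul_op.
Hypothesis B_finite : forall L, B L -> finite_pred L /\ psubset L (Omega_sig sig).
Hypothesis pin_reutenauer : forall K L, rat_closure B K -> rat_closure B L ->
  sclosure sig (setmul (pimage pV K) (pimage pV L))
    = setmul (sclosure sig (pimage pV K)) (sclosure sig (pimage pV L))
  /\ sclosure sig (splus (pimage pV L))
    = sig_gen sig (sclosure sig (pimage pV L)).

Lemma rat_closure_Omega L : rat_closure B L -> psubset L (Omega_sig sig).
Proof.
elim=> [L' /B_finite [] //|K L' _ OK _ OL|K L' _ OK _ OL|L' _ OL].
- by move=> w [/OK|/OL].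
- by move=> _ [a [b [Ka [Lb ->]]]]; apply: Omega_sig_mulw; [|apply: OK|apply: OL].
- by move=> w; elim=> [a /OL //|u a _ Ou /OL Oa]; apply: Omega_sig_mulw.
Qed.

Lemma rat_closure_lift L : rat_closure B L ->
  psubset (sclosure sig (pimage pV L)) (pimage pV (sclosure sig L)).
Proof.
elim=> [L' BL|K L' _ IK _ IL|K L' rcK IK rcL IL|L' rcL IL] v.
- have [finL LO] := B_finite BL.
  move/(sclosure_finite (finite_pred_pimage pV finL)) => [w Lw <-].
  by exists w => //; apply: subset_sclosure.
- move/(sclosure_mono (@pimage_punion _ _ pV K L')) /sclosure_punion => [/IK|/IL];
    apply: pimage_mono; apply: sclosure_mono.
  + by move=> w Kw; left.
  + by move=> w Lw; right.
- move/(sclosure_mono (@pimage_pV_setmul _ _ K L')).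
  rewrite (pin_reutenauer rcK rcL).1 => /(setmul_mono IK IL) /setmul_pimage_pV.
  by apply: pimage_mono; apply: setmul_sclosure.
- move/(sclosure_mono (@pimage_pV_splus _ _ L')).
  rewrite (pin_reutenauer rcL rcL).2; apply: sig_gen_pimage_pV => [|u /IL].
    apply: sclosure_sig_closed => [a /(rat_closure_Omega (rc_plus rcL))|].
      exact: Omega_sig_natural.
    exact: splus_mulw.
  by apply: pimage_mono; apply: sclosure_mono => a; apply: splus1.
Qed.

End Fullness.

Theorem proposition4p1 (sig : signature) (V : finSemigroup -> Prop) (X : finType)
  (B : (rawfam X allSG -> Prop) -> Prop) :
  sig mul_op ->
  pseudovariety V ->
  (forall L, B L -> finite_pred L /\ psubset L (Omega_sig sig)) ->
  (forall K L, rat_closure B K -> rat_closure B L ->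
     sclosure sig (setmul (pimage (@pV X V) K) (pimage (@pV X V) L))
       = setmul (sclosure sig (pimage (@pV X V) K)) (sclosure sig (pimage (@pV X V) L))
     /\ sclosure sig (splus (pimage (@pV X V) L))
       = sig_gen sig (sclosure sig (pimage (@pV X V) L))) ->
  forall L, rat_closure B L ->
    pimage (@pV X V) (sclosure sig L) = sclosure sig (pimage (@pV X V) L).
Proof.
move=> sig_mul _ B_finite pin_reutenauer L rcL.
apply: functional_extensionality => v; apply: propositional_extensionality; split.
- exact: pimage_pV_sclosure.
- exact: (rat_closure_lift sig_mul B_finite pin_reutenauer rcL).
Qed.
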